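(* Let $\rho=(r_n)_{n\in\omega}$ be a sequence of positive integers with $r_0=1$ and $r_n\mid r_{n+1}$ for all $n$. Let $G$ be a torsion-free abelian group with $G_\rho:=\bigcap_{n\in\omega}Gr_n=0$. Then $\mathrm{Ext}(\mathbb{Z}_{(\rho)},G)=0$ if and only if $G$ is complete in the $\rho$-topology.
   Context: $\mathbb{Z}_{(\rho)}=\langle 1/r_n:n\in\omega\rangle\subseteq\mathbb{Q}$ is the subgroup of $\mathbb{Q}$ generated by the $1/r_n$. The $\rho$-topology on $G$ is the group topology with basis of neighbourhoods of $0$ the subgroups $Gr_n$ $(n\in\omega)$; it is Hausdorff iff $G_\rho=0$. $G$ is complete in the $\rho$-topology if every Cauchy sequence in this topology converges in $G$. *)

From HB Require Import structures.
From mathcomp Require Import all_boot all_order all_algebra.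
From mathcomp Require Import boolp.
Set Implicit Arguments. Unset Strict Implicit. Unset Printing Implicit Defensive.
Import Order.TTheory GRing.Theory Num.Theory.
Local Open Scope ring_scope.

Definition is_hom (A B : zmodType) (f : A -> B) : Prop :=
  forall x y, f (x - y) = f x - f y.

Definition torsion_free (G : zmodType) : Prop :=
  forall (x : G) (n : nat), (0 < n)%N -> x *+ n = 0 -> x = 0.

Definition in_Gr (G : zmodType) (m : nat) (x : G) : Prop :=
  exists y : G, x = y *+ m.

Definition G_rho_zero (G : zmodType) (r : nat -> nat) : Prop :=
  forall x : G, (forall n, in_Gr (r n) x) -> x = 0.

(* Cauchy sequences / convergence in the rho-topology (basis of neighbourhoods
   of 0 : the subgroups G r_n). *)
Definition rho_cauchy (G : zmodType) (r : nat -> nat) (u : nat -> G) : Prop :=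
  forall n, exists N, forall i j, (N <= i)%N -> (N <= j)%N -> in_Gr (r n) (u i - u j).

Definition rho_converges (G : zmodType) (r : nat -> nat) (u : nat -> G) (g : G) : Prop :=
  forall n, exists N, forall i, (N <= i)%N -> in_Gr (r n) (u i - g).

Definition rho_complete (G : zmodType) (r : nat -> nat) : Prop :=
  forall u : nat -> G, rho_cauchy r u -> exists g : G, rho_converges r u g.

(* Z_(rho) = < 1/r_n : n > <= Q : the finite Z-linear combinations of the 1/r_n. *)
Definition Zrho_prop (r : nat -> nat) (x : rat) : Prop :=
  exists s : seq (nat * int), x = \sum_(p <- s) (p.2)%:~R / ((r p.1)%:R : rat).

Definition Zrho_pred (r : nat -> nat) : pred rat := fun x => `[< Zrho_prop r x >].

Lemma Zrho_zmod_closed (r : nat -> nat) : zmod_closed (Zrho_pred r).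
Proof.
split.
  by apply/asboolP; exists [::]; rewrite big_nil.
move=> x y /asboolP [s ->] /asboolP [t ->]; apply/asboolP.
exists (s ++ [seq (p.1, - p.2) | p <- t]).
rewrite big_cat /= big_map; congr (_ + _).
rewrite -sumrN; apply: eq_bigr => p _.
by rewrite mulrNz mulNr.
Qed.

HB.instance Definition _ (r : nat -> nat) :=
  GRing.isZmodClosed.Build rat (Zrho_pred r) (Zrho_zmod_closed r).

Definition Zrho (r : nat -> nat) : Type := {x : rat | x \in Zrho_pred r}.
HB.instance Definition _ r := [isSub for (@sval rat (fun x => x \in Zrho_pred r)) : Zrho r -> rat].
HB.instance Definition _ r := [Choice of Zrho r by <:].
HB.instance Definition _ r := [SubChoice_isSubZmodule of Zrho r by <:].

(* Ext(A, G) = 0 : every extension 0 -> G -> E -> A -> 0 of abelian groups splits. *)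
Definition Ext_zero (A G : zmodType) : Prop :=
  forall (E : zmodType) (i : G -> E) (p : E -> A),
    is_hom i -> is_hom p -> injective i -> (forall a, exists e, p e = a) ->
    (forall e, p e = 0 <-> exists g, e = i g) ->
    exists s : A -> E, is_hom s /\ forall a, p (s a) = a.

(* Write S_N = sum_(j < N) g_j r_j. Splitting an extension E of G by Z_(rho)
   amounts to choosing lifts e_n of 1/r_n with e_(n+1) (r_(n+1)/r_n) = e_n.
   If G is complete, start from arbitrary lifts: their defects
   e_(n+1) (r_(n+1)/r_n) - e_n = g_n lie in G, S_N converges to some l, and
   correcting e_n by (S_n - l)/r_n (well defined as G is torsion-free) makes
   the lifts coherent.  Conversely, if v is a rho-Cauchy sequence with
   v_(n+1) - v_n = g_n r_n, twist G x Z_(rho) by the coboundary of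
   x |-> x S_N, which becomes additive on any given pair of elements once N is
   large; a splitting of this extension evaluated at 1 produces the limit of
   S_N, hence of v. *)

From HB Require Import structures.
From mathcomp Require Import all_boot all_order all_algebra boolp.

Set Implicit Arguments. Unset Strict Implicit. Unset Printing Implicit Defensive.
Import Order.TTheory GRing.Theory Num.Theory.
Local Open Scope ring_scope.

Section Homomorphisms.
Variables (A B : zmodType) (f : A -> B).
Hypothesis f_hom : is_hom f.

Definition hom_additive : {additive A -> B} :=
  HB.pack f (GRing.isZmodMorphism.Build A B f f_hom).

Lemma homD : {morph f : x y / x + y}. Proof. exact: raddfD hom_additive. Qed.
Lemma homMn x n : f (x *+ n) = f x *+ n. Proof. exact: (raddfMn hom_additive n x). Qed.
Lemma homMz x z : f (x *~ z) = f x *~ z. Proof. exact: (raddfMz hom_additive z x). Qed.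

End Homomorphisms.

Section Divisibility.
Variable G : zmodType.
Implicit Types (x y : G) (m n : nat).

Lemma in_GrMn m x : in_Gr m (x *+ m). Proof. by exists x. Qed.

Lemma in_Gr0 m : in_Gr m (0 : G). Proof. by exists 0; rewrite mul0rn. Qed.

Lemma in_GrN m x : in_Gr m x -> in_Gr m (- x).
Proof. by move=> [y ->]; exists (- y); rewrite mulNrn. Qed.

Lemma in_GrD m x y : in_Gr m x -> in_Gr m y -> in_Gr m (x + y).
Proof. by move=> [a ->] [b ->]; exists (a + b); rewrite mulrnDl. Qed.

Lemma in_GrB m x y : in_Gr m x -> in_Gr m y -> in_Gr m (x - y).
Proof. by move=> xm /in_GrN; apply: in_GrD. Qed.

Lemma in_Gr_dvdn m n x : (m %| n)%N -> in_Gr n x -> in_Gr m x.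
Proof. by move=> /dvdnP[k ->] [y ->]; exists (y *+ k); rewrite -mulrnA. Qed.

Lemma mulrnI_torsion_free m x y : torsion_free G -> (0 < m)%N ->
  x *+ m = y *+ m -> x = y.
Proof.
move=> tf m_gt0 /eqP; rewrite -subr_eq0 -mulrnBl => /eqP.
by move=> /(tf _ _ m_gt0) /subr0_eq.
Qed.

End Divisibility.

Section RhoSeries.
Variables (r : nat -> nat) (G : zmodType).
Hypothesis r_dvd : forall n, (r n %| r n.+1)%N.

Lemma dvdn_r : {homo r : m n / (m <= n)%N >-> (m %| n)%N}.
Proof. exact: homo_leq dvdnn (fun _ _ _ h1 h2 => dvdn_trans h1 h2) r_dvd. Qed.

Definition rho_series (g : nat -> G) N : G := \sum_(j < N) g j *+ r j.

Lemma rho_series_tail g n m : (n <= m)%N ->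
  in_Gr (r n) (rho_series g m - rho_series g n).
Proof.
move=> le_nm; rewrite /rho_series -!(big_mkord xpredT (fun j => g j *+ r j)).
rewrite (@big_cat_nat _ _ _ n) //= addrAC subrr add0r.
rewrite big_nat_cond; elim/big_ind: _ => [|x y|j /andP[/andP[le_nj _] _]].
- exact: in_Gr0.
- exact: in_GrD.
- exact: in_Gr_dvdn (dvdn_r le_nj) (in_GrMn _ _).
Qed.

Lemma rho_series_cauchy g : rho_cauchy r (rho_series g).
Proof.
move=> n; exists n => i j le_ni le_nj.
rewrite -(subrKA (rho_series g n)) -[rho_series g n - _]opprB.
by apply: in_GrD; [|apply: in_GrN]; apply: rho_series_tail.
Qed.

Lemma rho_seriesP g l :
  rho_converges r (rho_series g) l <-> forall n, in_Gr (r n) (rho_series g n - l).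
Proof.
split=> [conv n | near n].
  have [N convN] := conv n; rewrite -(subrKA (rho_series g (maxn n N))) addrC.
  rewrite -[rho_series g n - _]opprB.
  by apply: in_GrB; [apply: convN | apply: rho_series_tail]; rewrite ?leq_maxl ?leq_maxr.
exists n => i le_ni; rewrite -(subrKA (rho_series g n)).
by apply: in_GrD; [apply: rho_series_tail | apply: near].
Qed.

End RhoSeries.

Section Rho.
Variable r : nat -> nat.
Hypothesis r_gt0 : forall n, (0 < r n)%N.
Hypothesis r_dvd : forall n, (r n %| r n.+1)%N.

Lemma r_neq0 n : ((r n)%:R : rat) != 0.
Proof. by rewrite pnatr_eq0 -lt0n. Qed.

Definition int_at (q : rat) N : bool := denq (q * (r N)%:R) == 1.
Definition num_at (q : rat) N : int := numq (q * (r N)%:R).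

Lemma num_atE q N : int_at q N -> q * (r N)%:R = (num_at q N)%:~R.
Proof. by move=> /eqP den1; rewrite numqE den1 mulr1. Qed.

Lemma int_at_int q N (a : int) : q * (r N)%:R = a%:~R -> int_at q N.
Proof. by rewrite /int_at => ->; rewrite denq_int. Qed.

Lemma num_at_int q N (a : int) : q * (r N)%:R = a%:~R -> num_at q N = a.
Proof. by rewrite /num_at => ->; rewrite numq_int. Qed.

Lemma int_at0 N : int_at 0 N.
Proof. by rewrite /int_at mul0r. Qed.

Lemma num_at_le q N M : int_at q N -> (N <= M)%N ->
  q * (r M)%:R = (num_at q N * (r M %/ r N)%N)%:~R.
Proof.
move=> qN le_NM; rewrite -{1}(divnK (dvdn_r r_dvd le_NM)) natrM mulrCA num_atE //.
by rewrite intrM mulrC.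
Qed.

Lemma int_at_le q N M : int_at q N -> (N <= M)%N -> int_at q M.
Proof. by move=> qN /(num_at_le qN) /int_at_int. Qed.

Lemma int_atD q q' N : int_at q N -> int_at q' N -> int_at (q + q') N.
Proof.
by move=> /num_atE e /num_atE e'; apply: int_at_int; rewrite mulrDl e e' -intrD.
Qed.

Lemma num_atD q q' N : int_at q N -> int_at q' N ->
  num_at (q + q') N = num_at q N + num_at q' N.
Proof.
by move=> /num_atE e /num_atE e'; apply: num_at_int; rewrite mulrDl e e' -intrD.
Qed.

Lemma int_atN q N : int_at q N -> int_at (- q) N.
Proof. by move=> /num_atE e; apply: int_at_int; rewrite mulNr e -intrN. Qed.

Lemma num_atN q N : int_at q N -> num_at (- q) N = - num_at q N.
Proof. by move=> /num_atE e; apply: num_at_int; rewrite mulNr e -intrN. Qed.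

Lemma int_atMn q N m : int_at q N -> int_at (q *+ m) N.
Proof.
by move=> qN; elim: m => [|m IH]; [rewrite mulr0n int_at0 | rewrite mulrS int_atD].
Qed.

Lemma int_at_exists (x : Zrho r) : exists N, int_at (val x) N.
Proof.
have /asboolP[s ->] := valP x.
elim: s => [|[m b] s [N sN]]; first by exists 0%N; rewrite big_nil int_at0.
exists (maxn m N); rewrite big_cons; apply: int_atD.
  by apply: (@int_at_le _ m); rewrite ?leq_maxl //= (@int_at_int _ _ b) ?mulfVK ?r_neq0.
exact: int_at_le sN (leq_maxr m N).
Qed.

Definition level (x : Zrho r) : nat := xchoose (int_at_exists x).

Lemma int_at_level x N : (level x <= N)%N -> int_at (val x) N.
Proof. exact: int_at_le (xchooseP (int_at_exists x)). Qed.

Lemma val_is_hom : is_hom (val : Zrho r -> rat).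
Proof. by []. Qed.

Lemma inv_r_subproof n : (r n)%:R^-1 \in Zrho_pred r.
Proof. by apply/asboolP; exists [:: (n, 1%:Z)]; rewrite big_seq1 mul1r. Qed.

Definition inv_r n : Zrho r := Sub ((r n)%:R^-1) (inv_r_subproof n).

Lemma inv_rE n : val (inv_r n) * (r n)%:R = 1.
Proof. by rewrite SubK mulVf ?r_neq0. Qed.

Lemma inv_r_mulrn n m : (n <= m)%N -> inv_r m *+ (r m %/ r n) = inv_r n.
Proof.
move=> le_nm; have k_gt0 : (0 < r m %/ r n)%N.
  by rewrite divn_gt0 // dvdn_leq // dvdn_r.
apply/val_inj; rewrite (homMn val_is_hom) !SubK -[_ *+ (r m %/ r n)]mulr_natr.
rewrite -{1}(divnK (dvdn_r r_dvd le_nm)) natrM invfM mulrAC mulVf ?mul1r //.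
by rewrite pnatr_eq0 -lt0n.
Qed.

Lemma int_at_inv_r n : int_at (val (inv_r n)) n.
Proof. exact: (@int_at_int _ _ 1 (inv_rE n)). Qed.

Section CocycleExtension.
Variables (G : zmodType) (g : nat -> G).
Implicit Types (x y : Zrho r) (N M : nat).

(* x S_N computed termwise, keeping only the terms where x r_j is an integer. *)
Definition scaled_sum x N : G :=
  \sum_(j < N) (if int_at (val x) j then g j *~ num_at (val x) j else 0).

Lemma scaled_sumS x N : int_at (val x) N ->
  scaled_sum x N.+1 = scaled_sum x N + g N *~ num_at (val x) N.
Proof. by move=> xN; rewrite /scaled_sum big_ord_recr /= xN. Qed.

Lemma scaled_sum0 N : scaled_sum 0 N = 0.
Proof.
by apply: big1 => j _; rewrite int_at0 (@num_at_int _ _ 0) ?mulr0z ?mul0r.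
Qed.

Definition defect x y N := scaled_sum (x + y) N - scaled_sum x N - scaled_sum y N.

Lemma defectS x y N : int_at (val x) N -> int_at (val y) N ->
  defect x y N.+1 = defect x y N.
Proof.
move=> xN yN; rewrite /defect !scaled_sumS ?int_atD // num_atD // mulrzDr.
set u := g N *~ _; set v := g N *~ _.
rewrite [u + v]addrC addrA [scaled_sum x N + u]addrC addrKA addrAC.
by rewrite [scaled_sum y N + v]addrC addrKA addrAC.
Qed.

Lemma defect_le x y N M : int_at (val x) N -> int_at (val y) N -> (N <= M)%N ->
  defect x y M = defect x y N.
Proof.
move=> xN yN /subnKC <-; elim: (M - N)%N => [|d IH]; first by rewrite addn0.
by rewrite addnS defectS ?IH //; apply: int_at_le (leq_addr d N).
Qed.

Definition cocycle x y : G := defect x y (maxn (level x) (level y)).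

Lemma cocycleE x y N : int_at (val x) N -> int_at (val y) N -> cocycle x y = defect x y N.
Proof.
move=> xN yN; set L := maxn (level x) (level y).
have xL : int_at (val x) L by apply: int_at_level; rewrite leq_maxl.
have yL : int_at (val y) L by apply: int_at_level; rewrite leq_maxr.
by rewrite /cocycle -(defect_le xL yL (leq_maxl L N)) (defect_le xN yN (leq_maxr L N)).
Qed.

Definition ext : Type := (G * Zrho r)%type.
HB.instance Definition _ := Choice.on ext.
Implicit Types a b : ext.

Definition ext_add a b : ext := (a.1 + b.1 + cocycle a.2 b.2, a.2 + b.2).
Definition ext_opp a : ext := (- a.1 - cocycle a.2 (- a.2), - a.2).

(* Together with the second projection, [chart N] identifies ext with the
   direct product G x Z_(rho) on elements whose second coordinate is integral
   at N; the group laws are checked through this identification. *)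
Definition chart N a : G := a.1 - scaled_sum a.2 N.

Lemma chart_inj N a b : a.2 = b.2 -> chart N a = chart N b -> a = b.
Proof.
case: a b => [c x] [d y] /= <-; rewrite /chart /= => /(congr1 (+%R^~ (scaled_sum x N))).
by rewrite !subrK => ->.
Qed.

Lemma chart_add N a b : int_at (val a.2) N -> int_at (val b.2) N ->
  chart N (ext_add a b) = chart N a + chart N b.
Proof.
move=> aN bN; rewrite /chart /= (cocycleE aN bN) /defect.
by rewrite addrAC -[scaled_sum _ N - _ - _]addrA subrKA addrACA.
Qed.

Lemma chart_opp N a : int_at (val a.2) N -> chart N (ext_opp a) = - chart N a.
Proof.
move=> aN; rewrite /chart /= (@cocycleE _ (- a.2) _ aN (int_atN aN)) /defect.
rewrite subrr scaled_sum0.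
by rewrite sub0r !opprD !opprK !addrA addrK.
Qed.

Lemma chart0 N : chart N (0, 0) = 0.
Proof. by rewrite /chart scaled_sum0 subrr. Qed.

Lemma ext_addA : associative ext_add.
Proof.
move=> a b c; set N := maxn (level a.2) (maxn (level b.2) (level c.2)).
have [aN bN cN] : [/\ int_at (val a.2) N, int_at (val b.2) N & int_at (val c.2) N].
  by split; apply: int_at_level; rewrite !leq_max leqnn ?orbT.
apply: (@chart_inj N); first by rewrite /= addrA.
by rewrite !chart_add ?addrA //; apply: int_atD.
Qed.

Lemma ext_addC : commutative ext_add.
Proof.
move=> a b; set N := maxn (level a.2) (level b.2).
have aN : int_at (val a.2) N by apply: int_at_level; rewrite leq_maxl.
have bN : int_at (val b.2) N by apply: int_at_level; rewrite leq_maxr.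
by apply: (@chart_inj N); rewrite /= ?chart_add // addrC.
Qed.

Lemma ext_add0 : left_id (0, 0) ext_add.
Proof.
move=> a; have aN := int_at_level (leqnn (level a.2)).
by apply: (@chart_inj (level a.2)); rewrite /= ?chart_add ?chart0 ?add0r // int_at0.
Qed.

Lemma ext_addN : left_inverse (0, 0) ext_opp ext_add.
Proof.
move=> a; have aN := int_at_level (leqnn (level a.2)).
apply: (@chart_inj (level a.2)); first by rewrite /= addNr.
by rewrite chart_add ?chart_opp ?chart0 ?addNr //; apply: int_atN.
Qed.

HB.instance Definition _ := GRing.isZmodule.Build ext ext_addA ext_addC ext_add0 ext_addN.

Lemma ext_mulrn_snd a m : (a *+ m).2 = a.2 *+ m.
Proof. by elim: m => [|m IH] //; rewrite !mulrS /= IH. Qed.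

Lemma chartMn N a m : int_at (val a.2) N -> chart N (a *+ m) = chart N a *+ m.
Proof.
move=> aN; elim: m => [|m IH]; first exact: chart0.
rewrite !mulrS [LHS]chart_add ?IH // ext_mulrn_snd (homMn val_is_hom).
exact: int_atMn.
Qed.

Lemma chart_embed N (c : G) : chart N (c, 0) = c.
Proof. by rewrite /chart scaled_sum0 subr0. Qed.

Hypothesis r0 : r 0%N = 1%N.

Lemma scaled_sum_one N : scaled_sum (inv_r 0) N = rho_series r g N.
Proof.
apply: eq_bigr => j _.
have one_j : val (inv_r 0) * (r j)%:R = (r j)%:Z%:~R by rewrite SubK r0 invr1 mul1r.
by rewrite (int_at_int one_j) (num_at_int one_j) -pmulrn.
Qed.

Lemma rho_series_converges :
  Ext_zero (Zrho r) G -> exists l, rho_converges r (rho_series r g) l.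
Proof.
move=> split_ext; have [|||||s [s_hom sK]] := split_ext ext (fun c => (c, 0)) snd.
- move=> c d; apply: (@chart_inj 0); first by rewrite /= subrr.
  by rewrite [RHS]chart_add ?chart_opp ?chart_embed // int_at0.
- by [].
- by move=> c d [].
- by move=> x; exists (0, x).
- by move=> [c x] /=; split=> [-> | [d [_ ->]]]; first by exists c.
exists (s (inv_r 0)).1; apply/(rho_seriesP r_dvd) => n; rewrite -opprB; apply: in_GrN.
have -> : (s (inv_r 0)).1 - rho_series r g n = chart n (s (inv_r 0)).
  by rewrite /chart sK scaled_sum_one.
rewrite -(inv_r_mulrn (leq0n n)) r0 divn1 (homMn s_hom) chartMn ?sK ?int_at_inv_r //.
exact: in_GrMn.
Qed.

End CocycleExtension.

Section CoherentLifts.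
Variables (E : zmodType) (p : E -> Zrho r) (e : nat -> E).
Hypothesis p_hom : is_hom p.
Hypothesis p_e : forall n, p (e n) = inv_r n.
Hypothesis e_coherent : forall n, e n.+1 *+ (r n.+1 %/ r n) = e n.
Implicit Types x y : Zrho r.

Lemma e_coherent_le n m : (n <= m)%N -> e m *+ (r m %/ r n) = e n.
Proof.
move=> /subnKC <-; elim: (m - n)%N => [|d IH]; first by rewrite addn0 divnn r_gt0.
rewrite addnS -IH -(e_coherent (n + d)) -mulrnA.
by rewrite muln_divA ?divnK // dvdn_r // leq_addr.
Qed.

Lemma e_num_at_le x N M : int_at (val x) N -> (N <= M)%N ->
  e N *~ num_at (val x) N = e M *~ num_at (val x) M.
Proof.
move=> xN le_NM; rewrite -(e_coherent_le le_NM) (num_at_int (num_at_le xN le_NM)).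
by rewrite pmulrn -mulrzA mulrC.
Qed.

Definition coherent_section (x : Zrho r) : E := e (level x) *~ num_at (val x) (level x).

Lemma coherent_sectionE x N : int_at (val x) N ->
  coherent_section x = e N *~ num_at (val x) N.
Proof.
move=> xN; set L := level x; have xL := int_at_level (leqnn L).
rewrite /coherent_section (e_num_at_le xL (leq_maxl L N)).
by rewrite (e_num_at_le xN (leq_maxr L N)).
Qed.

Lemma coherent_section_hom : is_hom coherent_section.
Proof.
move=> x y; set N := maxn (level x) (level y).
have xN : int_at (val x) N by apply: int_at_level; rewrite leq_maxl.
have yN : int_at (val y) N by apply: int_at_level; rewrite leq_maxr.
rewrite (coherent_sectionE xN) (coherent_sectionE yN).
rewrite (@coherent_sectionE (x - y) N (int_atD xN (int_atN yN))).
by rewrite (num_atD xN (int_atN yN)) (num_atN yN) mulrzBr.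
Qed.

Lemma coherent_sectionK x : p (coherent_section x) = x.
Proof.
rewrite (homMz p_hom) p_e; apply/val_inj; rewrite (homMz val_is_hom) SubK -mulrzr.
by rewrite -(num_atE (int_at_level (leqnn _))) mulrCA mulVf ?mulr1 ?r_neq0.
Qed.

End CoherentLifts.

Section LiftsFromCompleteness.
Variables (G E : zmodType) (i : G -> E) (p : E -> Zrho r).
Hypotheses (G_tf : torsion_free G) (G_complete : rho_complete G r).
Hypotheses (i_hom : is_hom i) (p_hom : is_hom p).
Hypothesis p_onto : forall x, exists e, p e = x.
Hypothesis ker_p : forall e, p e = 0 <-> exists c, e = i c.

Lemma coherent_lifts_exist : exists e : nat -> E,
  (forall n, p (e n) = inv_r n) /\ forall n, e n.+1 *+ (r n.+1 %/ r n) = e n.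
Proof.
have [e0 p_e0] := choice (fun n => p_onto (inv_r n)).
pose k n := (r n.+1 %/ r n)%N.
have e0_step n : exists c, e0 n.+1 *+ k n - e0 n = i c.
  by apply/ker_p; rewrite p_hom (homMn p_hom) !p_e0 inv_r_mulrn ?subrr.
have [c e0_defect] := choice e0_step.
have [l S_l] := G_complete (rho_series_cauchy r_dvd c).
have [h S_h] := choice (proj1 (rho_seriesP r_dvd c l) S_l).
have h_rec n : c n + h n = h n.+1 *+ k n.
  apply: (mulrnI_torsion_free G_tf (r_gt0 n)).
  rewrite mulrnDl -S_h -mulrnA divnK // -S_h /rho_series big_ord_recr /=.
  by rewrite addrCA addrA.
exists (fun n => e0 n - i (h n)); split => n.
  by rewrite p_hom p_e0 (proj2 (ker_p _)) ?subr0 //; exists (h n).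
rewrite mulrnBl -(homMn i_hom) -h_rec homD // -[e0 n.+1 *+ _](subrK (e0 n)) e0_defect.
by rewrite [i (c n) + _]addrC addrKA.
Qed.

End LiftsFromCompleteness.

End Rho.

Lemma rho_cauchy_modulus (r : nat -> nat) (G : zmodType) (u : nat -> G) :
  rho_cauchy r u -> exists phi : nat -> nat, (forall n, (phi n <= phi n.+1)%N) /\
    forall n i j, (phi n <= i)%N -> (phi n <= j)%N -> in_Gr (r n) (u i - u j).
Proof.
move=> /choice[N uN]; exists (fun n => \sum_(k < n.+1) N k)%N; split=> [n | n i j].
  by rewrite [X in (_ <= X)%N]big_ord_recr leq_addr.
rewrite big_ord_recr /= => le_i le_j.
by apply: uN; [apply: leq_trans le_i | apply: leq_trans le_j]; rewrite leq_addl.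
Qed.

Theorem rho_complete_of_Ext_zero (r : nat -> nat) (G : zmodType) :
  r 0%N = 1%N -> (forall n, (0 < r n)%N) -> (forall n, (r n %| r n.+1)%N) ->
  Ext_zero (Zrho r) G -> rho_complete G r.
Proof.
move=> r0 r_gt0 r_dvd split_ext u /rho_cauchy_modulus[phi [phi_mono phiP]].
have [g jump] := choice (fun n => phiP n _ _ (phi_mono n) (leqnn (phi n))).
have series_u N : rho_series r g N = u (phi N) - u (phi 0%N).
  rewrite -(telescope_sumr (fun k => u (phi k)) (leq0n N)) big_mkord.
  by apply: eq_bigr => j _; rewrite jump.
have [l S_l] := rho_series_converges r_gt0 r_dvd g r0 split_ext.
exists (l + u (phi 0%N)) => n; exists (phi n) => i le_i.
have -> : u i - (l + u (phi 0%N)) = (u i - u (phi n)) + (rho_series r g n - l).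
  by rewrite series_u addrA subrKA [l + _]addrC opprD addrA.
by apply: in_GrD; [apply: phiP | apply: (rho_seriesP r_dvd g l).1].
Qed.

Theorem Ext_zero_of_rho_complete (r : nat -> nat) (G : zmodType) :
  (forall n, (0 < r n)%N) -> (forall n, (r n %| r n.+1)%N) ->
  torsion_free G -> rho_complete G r -> Ext_zero (Zrho r) G.
Proof.
move=> r_gt0 r_dvd G_tf G_complete E i p i_hom p_hom _ p_onto ker_p.
have [e [p_e e_coherent]] :=
  coherent_lifts_exist r_gt0 r_dvd G_tf G_complete i_hom p_hom p_onto ker_p.
exists (coherent_section r_gt0 r_dvd e); split.
  exact: coherent_section_hom e_coherent.
exact: coherent_sectionK p_hom p_e.
Qed.

Theorem corollary4p1 (r : nat -> nat) (G : zmodType) :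
  r 0%N = 1%N ->
  (forall n, (0 < r n)%N) ->
  (forall n, (r n %| r n.+1)%N) ->
  torsion_free G ->
  G_rho_zero G r ->
  (Ext_zero (Zrho r) G <-> rho_complete G r).
Proof.
move=> r0 r_gt0 r_dvd G_tf _; split.
  exact: rho_complete_of_Ext_zero.
exact: Ext_zero_of_rho_complete.
Qed.
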